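(* Let $F:\mathsf V\to\mathsf W$ and $G:\mathsf W\to\mathsf V$ be morphisms of quantales, and assume that either $G\dashv F$ (as monotone maps), or $F\dashv G$ and $F$ is injective. Then for every Cauchy complete $\mathsf V$-category $X=(X,a)$, the $\mathsf W$-category $FX=(X,F\circ a)$ is Cauchy complete.
   Context: A quantale $(\mathsf V,\otimes,k)$ is a complete anti-symmetric lattice with an associative, commutative operation $\otimes$ with neutral element $k$ distributing over arbitrary suprema. A morphism of quantales $F:(\mathsf V,\otimes,k)\to(\mathsf W,\oplus,l)$ is a monotone map preserving all suprema with $F(u)\oplus F(v)=F(u\otimes v)$ and $F(k)=l$. $G\dashv F$ means $G(w)\le v\iff w\le F(v)$. A $\mathsf V$-category $(X,a)$ is a set with $a:X\times X\to\mathsf V$ such that $k\le a(x,x)$ and $a(x,y)\otimes a(y,z)\le a(x,z)$. A $\mathsf V$-module $\varphi:(X,a)\rightharpoonup(Y,b)$ is a map $X\times Y\to\mathsf V$ with $a(x,x')\otimes\varphi(x',y)\le\varphi(x,y)$ and $\varphi(x,y)\otimes b(y,y')\le\varphi(x,y')$; composition $(\psi\cdot\varphi)(x,z)=\bigvee_y\varphi(x,y)\otimes\psi(y,z)$; $\varphi\dashv\psi$ means $a\le\psi\cdot\varphi$ and $\varphi\cdot\psi\le b$. $E=(\{\star\},k)$. $X$ is Cauchy complete if every left adjoint module $\varphi:E\rightharpoonup X$ is of the form $y\mapsto a(x,y)$ for some $x\in X$. *)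

Set Implicit Arguments.

Record quantale := Quantale {
  qcar :> Type;
  qle : qcar -> qcar -> Prop;
  qle_refl : forall u, qle u u;
  qle_trans : forall u v w, qle u v -> qle v w -> qle u w;
  qle_antisym : forall u v, qle u v -> qle v u -> u = v;
  qsup : (qcar -> Prop) -> qcar;
  qsup_ub : forall (S : qcar -> Prop) u, S u -> qle u (qsup S);
  qsup_least : forall (S : qcar -> Prop) v,
      (forall u, S u -> qle u v) -> qle (qsup S) v;
  tens : qcar -> qcar -> qcar;
  qunit : qcar;
  tens_assoc : forall u v w, tens u (tens v w) = tens (tens u v) w;
  tens_comm : forall u v, tens u v = tens v u;
  tens_unit : forall u, tens qunit u = u;
  tens_sup : forall u (S : qcar -> Prop),
      tens u (qsup S) = qsup (fun w => exists v, S v /\ w = tens u v)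
}.

Arguments qle {q}.
Arguments qsup {q}.
Arguments tens {q}.
Arguments qunit {q}.

Definition quantale_morphism {V W : quantale} (F : V -> W) : Prop :=
  (forall u v, qle u v -> qle (F u) (F v)) /\
  (forall S : V -> Prop, F (qsup S) = qsup (fun w => exists v, S v /\ w = F v)) /\
  (forall u v, tens (F u) (F v) = F (tens u v)) /\
  F qunit = qunit.

Definition madjoint {V W : quantale} (G : W -> V) (F : V -> W) : Prop :=
  forall w v, qle (G w) v <-> qle w (F v).

Definition is_Vcat {V : quantale} (X : Type) (a : X -> X -> V) : Prop :=
  (forall x, qle qunit (a x x)) /\
  (forall x y z, qle (tens (a x y) (a y z)) (a x z)).

Definition is_module {V : quantale} (X Y : Type) (a : X -> X -> V)
    (b : Y -> Y -> V) (phi : X -> Y -> V) : Prop :=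
  (forall x x' y, qle (tens (a x x') (phi x' y)) (phi x y)) /\
  (forall x y y', qle (tens (phi x y) (b y y')) (phi x y')).

Definition mcomp {V : quantale} (X Y Z : Type) (psi : Y -> Z -> V)
    (phi : X -> Y -> V) : X -> Z -> V :=
  fun x z => qsup (fun w => exists y, w = tens (phi x y) (psi y z)).

Definition mod_adjoint {V : quantale} (X Y : Type) (a : X -> X -> V)
    (b : Y -> Y -> V) (phi : X -> Y -> V) (psi : Y -> X -> V) : Prop :=
  (forall x x', qle (a x x') (mcomp psi phi x x')) /\
  (forall y y', qle (mcomp phi psi y y') (b y y')).

Definition Ecat (V : quantale) : unit -> unit -> V := fun _ _ => qunit.

Definition left_adjoint_module {V : quantale} (X Y : Type) (a : X -> X -> V)
    (b : Y -> Y -> V) (phi : X -> Y -> V) : Prop :=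
  is_module a b phi /\
  exists psi : Y -> X -> V, is_module b a psi /\ mod_adjoint a b phi psi.

Definition cauchy_complete {V : quantale} (X : Type) (a : X -> X -> V) : Prop :=
  forall phi : unit -> X -> V, left_adjoint_module (@Ecat V) a phi ->
    exists x : X, forall y : X, phi tt y = a x y.

(** The adjunction [phi -| psi] in [FX] is pushed along [G] to an adjunction
    [G_*phi -| G_*psi] in [X] (the counit survives because [G (F u) <= u] in
    both cases), so completeness of [X] makes it representable by some [x].
    Applying [F] back compares [phi] with [F a(x,-)] from above when [G -| F]
    and from below when [F -| G]; since a left adjoint module out of [E] is
    antitone in its right adjoint, either comparison forces equality. *)

Set Implicit Arguments.
Unset Strict Implicit.

Section QuantaleFacts.
Variable Q : quantale.

Lemma qle_sup (S : Q -> Prop) (u v : Q) : S u -> qle v u -> qle v (qsup S).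
Proof. intros Su vu. eapply qle_trans; [exact vu | apply qsup_ub; exact Su]. Qed.

Lemma tens_unitr (u : Q) : tens u qunit = u.
Proof. rewrite tens_comm. apply tens_unit. Qed.

Lemma tens_sup_le (u c : Q) (S : Q -> Prop) :
  (forall s, S s -> qle (tens u s) c) -> qle (tens u (qsup S)) c.
Proof.
  intros H. rewrite tens_sup. apply qsup_least. intros w [v [Sv ->]]. exact (H v Sv).
Qed.

Lemma sup_tens_le (u c : Q) (S : Q -> Prop) :
  (forall s, S s -> qle (tens s u) c) -> qle (tens (qsup S) u) c.
Proof.
  intros H. rewrite tens_comm. apply tens_sup_le. intros s Ss. rewrite tens_comm. exact (H s Ss).
Qed.

(* [v'] is the supremum of [{v, v'}], so distributivity gives monotonicity. *)
Lemma tens_monor (u v v' : Q) : qle v v' -> qle (tens u v) (tens u v').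
Proof.
  intros vv'.
  assert (sup_pair : qsup (fun t => t = v \/ t = v') = v').
  { apply qle_antisym.
    - apply qsup_least. intros t [-> | ->]; [exact vv' | apply qle_refl].
    - apply qsup_ub. right; reflexivity. }
  rewrite <- sup_pair, tens_sup. apply qsup_ub. exists v. split; [left |]; reflexivity.
Qed.

Lemma tens_monol (u u' v : Q) : qle u u' -> qle (tens u v) (tens u' v).
Proof. intros uu'. rewrite (tens_comm _ u), (tens_comm _ u'). apply tens_monor, uu'. Qed.

Lemma tens_mono (u u' v v' : Q) : qle u u' -> qle v v' -> qle (tens u v) (tens u' v').
Proof.
  intros uu' vv'. eapply qle_trans; [apply tens_monol, uu' | apply tens_monor, vv'].
Qed.

Lemma qle_of_unit_le_sup (S : Q -> Prop) (u c : Q) :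
  qle qunit (qsup S) -> (forall s, S s -> qle (tens s u) c) -> qle u c.
Proof.
  intros unit_le H. rewrite <- (tens_unit _ u).
  eapply qle_trans; [apply tens_monol, unit_le | apply sup_tens_le, H].
Qed.

End QuantaleFacts.

Section QuantaleMorphisms.
Variables (V W : quantale) (F : V -> W).
Hypothesis hF : quantale_morphism F.

Lemma qmor_mono (u v : V) : qle u v -> qle (F u) (F v).
Proof. destruct hF as [mono _]. apply mono. Qed.

Lemma qmor_tens (u v : V) : tens (F u) (F v) = F (tens u v).
Proof. destruct hF as [_ [_ [mult _]]]. apply mult. Qed.

Lemma qmor_unit : F qunit = qunit.
Proof. destruct hF as [_ [_ [_ unital]]]. exact unital. Qed.

Lemma qmor_sup_le (S : V -> Prop) (c : W) :
  (forall s, S s -> qle (F s) c) -> qle (F (qsup S)) c.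
Proof.
  destruct hF as [_ [sup _]]. intros H. rewrite sup.
  apply qsup_least. intros w [v [Sv ->]]. exact (H v Sv).
Qed.

Lemma Vcat_map (X : Type) (a : X -> X -> V) :
  is_Vcat a -> is_Vcat (fun x y => F (a x y)).
Proof.
  intros [refl trans]. split.
  - intros x. rewrite <- qmor_unit. apply qmor_mono, refl.
  - intros x y z. rewrite qmor_tens. apply qmor_mono, trans.
Qed.

End QuantaleMorphisms.

Section MonotoneAdjunctions.
Variables (V W : quantale) (L : V -> W) (R : W -> V).
Hypothesis LR : madjoint L R.

Lemma madjoint_counit (w : W) : qle (L (R w)) w.
Proof. apply LR, qle_refl. Qed.

Lemma madjoint_unit (v : V) : qle v (R (L v)).
Proof. apply LR, qle_refl. Qed.

Lemma madjoint_retract :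
  (forall u v, qle u v -> qle (L u) (L v)) ->
  (forall u v, L u = L v -> u = v) ->
  forall v, R (L v) = v.
Proof.
  intros L_mono L_inj v. apply L_inj, qle_antisym.
  - apply madjoint_counit.
  - apply L_mono, madjoint_unit.
Qed.

End MonotoneAdjunctions.

Section AdjointModulesFromE.
Variables (V : quantale) (Y : Type) (b : Y -> Y -> V).

Lemma adjoint_unit (phi : unit -> Y -> V) (psi : Y -> unit -> V) :
  mod_adjoint (Ecat V) b phi psi ->
  qle qunit (qsup (fun w => exists y, w = tens (phi tt y) (psi y tt))).
Proof. intros [unit _]. exact (unit tt tt). Qed.

Lemma adjoint_counit (phi : unit -> Y -> V) (psi : Y -> unit -> V) :
  mod_adjoint (Ecat V) b phi psi ->
  forall y y', qle (tens (psi y tt) (phi tt y')) (b y y').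
Proof.
  intros [_ counit] y y'. eapply qle_trans; [| exact (counit y y')].
  apply qsup_ub. exists tt. reflexivity.
Qed.

Lemma mod_adjoint_intro (phi : unit -> Y -> V) (psi : Y -> unit -> V) :
  qle qunit (qsup (fun w => exists y, w = tens (phi tt y) (psi y tt))) ->
  (forall y y', qle (tens (psi y tt) (phi tt y')) (b y y')) ->
  mod_adjoint (Ecat V) b phi psi.
Proof.
  intros unit counit. split.
  - intros [] []. exact unit.
  - intros y y'. apply qsup_least. intros w [[] ->]. apply counit.
Qed.

Lemma left_adjoint_antitone (phi phi' : unit -> Y -> V) (psi psi' : Y -> unit -> V) :
  is_module (Ecat V) b phi ->
  mod_adjoint (Ecat V) b phi psi -> mod_adjoint (Ecat V) b phi' psi' ->
  (forall y, qle (psi y tt) (psi' y tt)) ->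
  forall y, qle (phi' tt y) (phi tt y).
Proof.
  intros [_ phi_act] adj adj' psi_le y.
  apply (qle_of_unit_le_sup (adjoint_unit adj)). intros s [w ->].
  rewrite <- tens_assoc. eapply qle_trans; [| apply (phi_act tt w y)].
  apply tens_monor. eapply qle_trans; [apply tens_monol, psi_le |].
  apply (adjoint_counit adj').
Qed.

Lemma right_adjoint_antitone (phi phi' : unit -> Y -> V) (psi psi' : Y -> unit -> V) :
  is_module b (Ecat V) psi ->
  mod_adjoint (Ecat V) b phi psi -> mod_adjoint (Ecat V) b phi' psi' ->
  (forall y, qle (phi tt y) (phi' tt y)) ->
  forall y, qle (psi' y tt) (psi y tt).
Proof.
  intros [psi_act _] adj adj' phi_le y.
  apply (qle_of_unit_le_sup (adjoint_unit adj)). intros s [w ->].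
  rewrite tens_comm, tens_assoc. eapply qle_trans; [| apply (psi_act y w tt)].
  apply tens_monol. eapply qle_trans; [apply tens_monor, phi_le |].
  apply (adjoint_counit adj').
Qed.

Hypothesis hb : is_Vcat b.

Lemma repr_left_module (x : Y) : is_module (Ecat V) b (fun _ y => b x y).
Proof.
  destruct hb as [_ trans]. split.
  - intros t t' y. unfold Ecat. rewrite tens_unit. apply qle_refl.
  - intros t y y'. apply trans.
Qed.

Lemma repr_right_module (x : Y) : is_module b (Ecat V) (fun y _ => b y x).
Proof.
  destruct hb as [_ trans]. split.
  - intros y y' t. apply trans.
  - intros y t t'. unfold Ecat. rewrite tens_unitr. apply qle_refl.
Qed.

Lemma repr_adjoint (x : Y) :
  mod_adjoint (Ecat V) b (fun _ y => b x y) (fun y _ => b y x).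
Proof.
  destruct hb as [refl trans]. apply mod_adjoint_intro.
  - apply (qle_sup (u := tens (b x x) (b x x))); [exists x; reflexivity |].
    rewrite <- (tens_unit _ qunit). apply tens_mono; apply refl.
  - intros y y'. apply trans.
Qed.

Lemma left_adjoint_eq_of_le (phi : unit -> Y -> V) (psi : Y -> unit -> V) (x : Y) :
  is_module (Ecat V) b phi -> mod_adjoint (Ecat V) b phi psi ->
  (forall y, qle (phi tt y) (b x y)) -> (forall y, qle (psi y tt) (b y x)) ->
  forall y, phi tt y = b x y.
Proof.
  intros phi_mod adj phi_le psi_le y. apply qle_antisym; [apply phi_le |].
  exact (left_adjoint_antitone phi_mod adj (repr_adjoint x) psi_le y).
Qed.

Lemma left_adjoint_eq_of_ge (phi : unit -> Y -> V) (psi : Y -> unit -> V) (x : Y) :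
  mod_adjoint (Ecat V) b phi psi ->
  (forall y, qle (b x y) (phi tt y)) -> (forall y, qle (b y x) (psi y tt)) ->
  forall y, phi tt y = b x y.
Proof.
  intros adj phi_ge psi_ge y. apply qle_antisym; [| apply phi_ge].
  exact (left_adjoint_antitone (repr_left_module x) (repr_adjoint x) adj psi_ge y).
Qed.

Lemma right_adjoint_repr (phi : unit -> Y -> V) (psi : Y -> unit -> V) (x : Y) :
  is_module b (Ecat V) psi -> mod_adjoint (Ecat V) b phi psi ->
  (forall y, phi tt y = b x y) -> forall y, psi y tt = b y x.
Proof.
  intros psi_mod adj phi_x y. apply qle_antisym.
  - apply (right_adjoint_antitone (repr_right_module x) (repr_adjoint x) adj).
    intros z. rewrite phi_x. apply qle_refl.
  - apply (right_adjoint_antitone psi_mod adj (repr_adjoint x)).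
    intros z. rewrite phi_x. apply qle_refl.
Qed.

End AdjointModulesFromE.

Section Transport.
Variables (V W : quantale) (F : V -> W) (G : W -> V).
Variables (X : Type) (a : X -> X -> V).
Hypothesis ha : is_Vcat a.

Definition transport_left (phi : unit -> X -> W) : unit -> X -> V :=
  fun _ y => qsup (fun w => exists z, w = tens (G (phi tt z)) (a z y)).

Definition transport_right (psi : X -> unit -> W) : X -> unit -> V :=
  fun y _ => qsup (fun w => exists z, w = tens (a y z) (G (psi z tt))).

Lemma transport_left_module (phi : unit -> X -> W) :
  is_module (Ecat V) a (transport_left phi).
Proof.
  destruct ha as [_ trans]. split.
  - intros t t' y. unfold Ecat. rewrite tens_unit. apply qle_refl.
  - intros t y y'. apply sup_tens_le. intros s [z ->].
    apply (qle_sup (u := tens (G (phi tt z)) (a z y'))); [exists z; reflexivity |].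
    rewrite <- tens_assoc. apply tens_monor, trans.
Qed.

Lemma transport_right_module (psi : X -> unit -> W) :
  is_module a (Ecat V) (transport_right psi).
Proof.
  destruct ha as [_ trans]. split.
  - intros y y' t. apply tens_sup_le. intros s [z ->].
    apply (qle_sup (u := tens (a y z) (G (psi z tt)))); [exists z; reflexivity |].
    rewrite tens_assoc. apply tens_monol, trans.
  - intros y t t'. unfold Ecat. rewrite tens_unitr. apply qle_refl.
Qed.

Lemma le_transport_left (phi : unit -> X -> W) (y : X) :
  qle (G (phi tt y)) (transport_left phi tt y).
Proof.
  destruct ha as [refl _]. apply (qle_sup (u := tens (G (phi tt y)) (a y y))).
  - exists y; reflexivity.
  - eapply qle_trans; [| apply tens_monor, refl]. rewrite tens_unitr. apply qle_refl.
Qed.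

Lemma le_transport_right (psi : X -> unit -> W) (y : X) :
  qle (G (psi y tt)) (transport_right psi y tt).
Proof.
  destruct ha as [refl _]. apply (qle_sup (u := tens (a y y) (G (psi y tt)))).
  - exists y; reflexivity.
  - eapply qle_trans; [| apply tens_monol, refl]. rewrite tens_unit. apply qle_refl.
Qed.

Hypothesis hG : quantale_morphism G.

Lemma transport_adjoint (phi : unit -> X -> W) (psi : X -> unit -> W) :
  (forall u, qle (G (F u)) u) ->
  mod_adjoint (Ecat W) (fun x y => F (a x y)) phi psi ->
  mod_adjoint (Ecat V) a (transport_left phi) (transport_right psi).
Proof.
  destruct ha as [_ trans]. intros GF_le adj. apply mod_adjoint_intro.
  - rewrite <- (qmor_unit hG).
    eapply qle_trans; [apply (qmor_mono hG), (adjoint_unit adj) |].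
    apply (qmor_sup_le hG). intros s [y ->]. rewrite <- (qmor_tens hG).
    apply (qle_sup (u := tens (transport_left phi tt y) (transport_right psi y tt)));
      [exists y; reflexivity |].
    apply tens_mono; [apply le_transport_left | apply le_transport_right].
  - intros y y'. apply sup_tens_le. intros s [z ->]. apply tens_sup_le. intros s [z' ->].
    rewrite tens_assoc. eapply qle_trans; [| apply (trans y z' y')]. apply tens_monol.
    rewrite <- tens_assoc. eapply qle_trans; [| apply (trans y z z')]. apply tens_monor.
    rewrite (qmor_tens hG). eapply qle_trans; [| apply (GF_le (a z z'))].
    apply (qmor_mono hG), (adjoint_counit adj).
Qed.

Hypothesis hF : quantale_morphism F.

Lemma map_transport_left_le (phi : unit -> X -> W) :
  (forall w, qle (F (G w)) w) ->
  is_module (Ecat W) (fun x y => F (a x y)) phi ->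
  forall y, qle (F (transport_left phi tt y)) (phi tt y).
Proof.
  intros FG_le [_ phi_act] y. apply (qmor_sup_le hF). intros s [z ->].
  rewrite <- (qmor_tens hF). eapply qle_trans; [apply tens_monol, FG_le |].
  apply (phi_act tt z y).
Qed.

Lemma map_transport_right_le (psi : X -> unit -> W) :
  (forall w, qle (F (G w)) w) ->
  is_module (fun x y => F (a x y)) (Ecat W) psi ->
  forall y, qle (F (transport_right psi y tt)) (psi y tt).
Proof.
  intros FG_le [psi_act _] y. apply (qmor_sup_le hF). intros s [z ->].
  rewrite <- (qmor_tens hF). eapply qle_trans; [apply tens_monor, FG_le |].
  apply (psi_act y z tt).
Qed.

End Transport.

Theorem corollary3p3 (V W : quantale) (F : V -> W) (G : W -> V) :
  quantale_morphism F -> quantale_morphism G ->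
  (madjoint G F \/ (madjoint F G /\ (forall u v : V, F u = F v -> u = v))) ->
  forall (X : Type) (a : X -> X -> V),
    is_Vcat a -> cauchy_complete a ->
    cauchy_complete (fun x y => F (a x y)).
Proof.
  intros hF hG hadj X a ha a_complete phi [phi_mod [psi [psi_mod adj]]].
  assert (GF_le : forall u, qle (G (F u)) u).
  { destruct hadj as [GF | [FG F_inj]]; intros u.
    - apply (madjoint_counit GF).
    - rewrite (madjoint_retract FG (qmor_mono hF) F_inj). apply qle_refl. }
  pose proof (transport_adjoint ha hG GF_le adj) as adjG.
  destruct (a_complete (transport_left G a phi)) as [x phiG_x].
  { split; [apply transport_left_module, ha |].
    exists (transport_right G a psi). split; [apply transport_right_module, ha | exact adjG]. }
  pose proof (right_adjoint_repr ha (transport_right_module G ha psi) adjG phiG_x) as psiG_x.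
  exists x. destruct hadj as [GF | [FG _]].
  - apply (left_adjoint_eq_of_le (Vcat_map hF ha) phi_mod adj); intros y;
      (eapply qle_trans; [apply (madjoint_unit GF) | apply (qmor_mono hF)]).
    + rewrite <- phiG_x. apply le_transport_left, ha.
    + rewrite <- psiG_x. apply le_transport_right, ha.
  - apply (left_adjoint_eq_of_ge (Vcat_map hF ha) adj); intros y.
    + rewrite <- phiG_x. exact (map_transport_left_le hF (madjoint_counit FG) phi_mod y).
    + rewrite <- psiG_x. exact (map_transport_right_le hF (madjoint_counit FG) psi_mod y).
Qed.
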